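(* Define polynomials $K_n(\lambda)$, $n\ge0$, by $K_0=2$, $K_1=1$, $K_2=\lambda-2$, $K_3=\lambda-3$, and for $p\ge2$, $K_{2p+1}=(\lambda-2)K_{2p-1}-K_{2p-3}$ and $K_{2p}=(\lambda-2)K_{2p-2}-K_{2p-4}$. Then for $n\ge3$, $K_n$ has degree $\lfloor n/2\rfloor$ and $$\mathcal{K}_n(\lambda)=\lambda^{\lfloor (n+1)/2\rfloor}K_n(\lambda).$$
   Context: $\mathcal{K}_n(\lambda)=\det(\lambda I_n-M_n)$ where $M_n$ is the $n\times n$ matrix with $(M_n)_{j,i}=1$ if $i\ge j-1$ or $(j,i)=(n,n-2)$, and $0$ otherwise. *)

From mathcomp Require Import all_boot all_order all_algebra.
Set Implicit Arguments. Unset Strict Implicit. Unset Printing Implicit Defensive.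
Import GRing.Theory.
Local Open Scope ring_scope.

(* The polynomials K_n over the integers:
   K_0 = 2, K_1 = 1, K_2 = X - 2, K_3 = X - 3,
   K_{m+4} = (X - 2) K_{m+2} - K_m  (covers both parity recursions, p >= 2). *)
Fixpoint Kpoly (n : nat) : {poly int} :=
  match n with
  | 0 => 2%:P
  | 1 => 1
  | 2 => 'X - 2%:P
  | 3 => 'X - 3%:P
  | (m.+2 as k).+2 => ('X - 2%:P) * Kpoly k - Kpoly m
  end.

(* M_n, 0-indexed: (M_n)_{j,i} = 1 iff i >= j-1 (i.e. j <= i+1)
   or (j,i) = (n-1, n-3) (the 1-indexed entry (n, n-2)). *)
Definition Mmat (n : nat) : 'M[int]_n :=
  \matrix_(j < n, i < n)
    (if ((j <= i.+1)%N || ((j == n.-1 :> nat) && (i == (n - 3)%N :> nat))) then 1 else 0).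

Definition calK (n : nat) : {poly int} := char_poly (Mmat n).

From mathcomp Require Import all_boot all_order all_algebra.
From mathcomp Require Import zify ring.
Set Implicit Arguments. Unset Strict Implicit. Unset Printing Implicit Defensive.
Import GRing.Theory.
Local Open Scope ring_scope.

(* For n >= 4 the first column of X I - M_n has nonzero entries only in rows
   0 and 1.  The (0,0)-minor is X I - M_(n-1), and the (1,0)-minor differs
   from it only in its first row (all -1 instead of X - 1, -1, ..., -1), so
   multilinearity in that row gives calK_n = X calK_(n-1) - X calK_(n-2).
   Both parity recursions for K_n merge into
   K_(m+2) = X^[m even] K_(m+1) - K_m, which is exactly that determinant
   recursion once calK_n is divided by X^((n+1)/2); the same recursion shows
   inductively that K_n is monic of degree n/2. *)

Lemma monicBl (R : nzRingType) (p q : {poly R}) :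
  (size q < size p)%N -> p \is monic -> p - q \is monic.
Proof. by move=> ltqp; rewrite !monicE lead_coefDl ?size_polyN. Qed.

Lemma size_polyBl (R : nzRingType) (p q : {poly R}) :
  (size q < size p)%N -> size (p - q) = size p.
Proof. by move=> ltqp; rewrite size_polyDl ?size_polyN. Qed.

Lemma Kpoly_rec m : Kpoly m.+2 = 'X ^+ (~~ odd m) * Kpoly m.+1 - Kpoly m.
Proof.
suff: Kpoly m.+2 = 'X ^+ (~~ odd m) * Kpoly m.+1 - Kpoly m /\
      Kpoly m.+3 = 'X ^+ odd m * Kpoly m.+2 - Kpoly m.+1 by case.
elim: m => [|m [IHm IHm1]]; first by split => /=; ring.
rewrite !oddS !negbK; split=> //.
rewrite -[Kpoly m.+4]/(('X - 2%:P) * Kpoly m.+2 - Kpoly m) IHm1 IHm.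
by case: (odd m); ring.
Qed.

Lemma Kpoly_monic_size n :
  (0 < n)%N -> Kpoly n \is monic /\ size (Kpoly n) = (n./2).+1.
Proof.
move=> /prednK <-; elim/ltn_ind: n.-1 => -[|[|m]] IH.
- by rewrite monic1 size_poly1.
- by rewrite monicXsubC size_XsubC.
have [monK2 sizeK2] := IH m.+1 (ltnSn _).
have [_ sizeK1] := IH m (leqW (ltnSn _)).
have sizeXK2 : size ('X ^+ odd m * Kpoly m.+2) = (odd m + m./2).+2.
  by rewrite size_monicM ?monicXn ?(monic_neq0 monK2) // size_polyXn sizeK2 /= !addnS.
have ltK1 : (size (Kpoly m.+1) < size ('X ^+ odd m * Kpoly m.+2)%R)%N.
  by rewrite sizeXK2 sizeK1 [(m.+1)./2]uphalf_half.
rewrite (Kpoly_rec m.+1) oddS negbK size_polyBl // monicBl ?monicMl ?monicXn //.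
by rewrite sizeXK2 [(m.+3)./2]/= uphalf_half.
Qed.

Lemma det_delta_row0 (R : comPzRingType) k (B : 'M[R]_k.+1) :
  \det (\matrix_(j, i) if j == ord0 then (i == ord0)%:R else B j i) =
  \det (row' ord0 (col' ord0 B)).
Proof.
rewrite (expand_det_row _ ord0) big_ord_recl big1 ?addr0 => [|i _]; last first.
  by rewrite !mxE mul0r.
rewrite !mxE /cofactor expr0 !mul1r; congr (\det _); apply/matrixP => j i.
by rewrite !mxE.
Qed.

Lemma Mmat_minor0 k : row' ord0 (col' ord0 (Mmat k.+1)) = Mmat k.
Proof.
apply/matrixP => j i; rewrite !mxE /= ltnS; congr (if _ then _ else _).
have ltjk := ltn_ord j; have ltik := ltn_ord i.
rewrite /bump !add1n; case: leqP => //= ltij.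
apply/idP/idP => /andP[/eqP e1 /eqP e2]; apply/andP; split; apply/eqP; lia.
Qed.

Lemma char_poly_mx_Mmat_minor0 k :
  row' ord0 (col' ord0 (char_poly_mx (Mmat k.+1))) = char_poly_mx (Mmat k).
Proof. by rewrite row'_col'_char_poly_mx Mmat_minor0. Qed.

Lemma calK_rec m : calK m.+4 = 'X * calK m.+3 - 'X * calK m.+2.
Proof.
rewrite /calK /char_poly; set A := char_poly_mx (Mmat m.+4).
set B := char_poly_mx (Mmat m.+3).
have minorA00 : row' ord0 (col' ord0 A) = B by exact: char_poly_mx_Mmat_minor0.
set C := \matrix_(j, i) if j == ord0 then (i == ord0)%:R else B j i.
have lift10 (j : 'I_m.+2) : lift 1 (lift ord0 j) = lift ord0 (lift ord0 j).
  exact: val_inj.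
have rowsA1B : row' ord0 (row' 1 (col' ord0 A)) = row' ord0 B.
  by rewrite -minorA00; apply/matrixP => j i; rewrite !mxE lift10.
have minorA10 : \det (row' 1 (col' ord0 A)) = \det B - 'X * \det C.
  (* row 0 of the minor is row 0 of B minus X times row 0 of C *)
  rewrite -[\det B]mul1r -mulNr; apply: (determinant_multilinear (i0 := ord0)).
  - apply/matrixP => ? i; rewrite !mxE /=.
    by rewrite [ord0 == i]eq_sym; case: (i == ord0); ring.
  - by rewrite rowsA1B.
  - by rewrite rowsA1B; apply/matrixP => j i; rewrite !mxE.
have detC : \det C = \det (char_poly_mx (Mmat m.+2)).
  by rewrite det_delta_row0 char_poly_mx_Mmat_minor0.
rewrite (expand_det_col A ord0) big_ord_recl big_ord_recl big1 ?addr0 => [|j _].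
  by rewrite /cofactor minorA00 minorA10 detC !mxE /bump /=; ring.
by rewrite !mxE /= !subSS subn0 andbF subr0 mul0r.
Qed.

Lemma calK2 : calK 2 = 'X * ('X - 2%:P).
Proof.
rewrite /calK /char_poly (expand_det_col _ ord0) !big_ord_recl big_ord0 /cofactor.
set M := char_poly_mx _; rewrite !(@det_mx11 _ (row' _ (col' _ M))).
by rewrite !mxE /bump /=; ring.
Qed.

Lemma calK3 : calK 3 = 'X ^+ 2 * ('X - 3%:P).
Proof.
rewrite /calK /char_poly (expand_det_col _ ord0) !big_ord_recl big_ord0 /cofactor.
set M := char_poly_mx _; rewrite !(expand_det_col (row' _ (col' _ M)) ord0).
rewrite !big_ord_recl !big_ord0 /cofactor.
rewrite !(@det_mx11 _ (row' _ (col' _ (row' _ (col' _ M))))).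
by rewrite !mxE /bump /=; ring.
Qed.

Lemma calK_Kpoly n : (1 < n)%N -> calK n = 'X ^+ (n.+1)./2 * Kpoly n.
Proof.
case: n => [|[|m]] // _.
suff: calK m.+2 = 'X ^+ (m.+3)./2 * Kpoly m.+2 /\
      calK m.+3 = 'X ^+ (m.+4)./2 * Kpoly m.+3 by case.
elim: m => [|m [IHm IHm1]]; first by rewrite calK2 calK3.
split=> //; rewrite calK_rec IHm1 IHm (Kpoly_rec m.+2) !oddS !negbK.
rewrite -[(m.+1.+4)./2]/(uphalf m.+4) -[(m.+3)./2]/(uphalf m.+2) !uphalf_half /=.
by rewrite !negbK; case: (odd m); rewrite ?add1n ?add0n !exprS; ring.
Qed.

Theorem proposition4 (n : nat) (hn : (3 <= n)%N) :
  (size (Kpoly n)).-1 = n./2 /\ calK n = 'X^((n.+1)./2) * Kpoly n.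
Proof.
have [_ sizeK] := Kpoly_monic_size (ltnW (ltnW hn)).
by rewrite sizeK; split=> //; exact: calK_Kpoly (ltnW hn).
Qed.
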